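(* In the setting below, for all $j\in\mathcal{S}$ the matrix $B_j=\gamma_jp_j\,M^{1/2}_{:,j}(M^{1/2}_{:,j})^\top$ satisfies $\|B_j\|_2\le1$.
   Context: Setting: $f:\mathbb{R}^p\to\mathbb{R}$ convex, differentiable with Lipschitz gradient; $g_j:\mathbb{R}\to\mathbb{R}\cup\{+\infty\}$ proper closed convex; $x^\star$ a minimizer of $f(x)+\sum_jg_j(x_j)$; $\mathcal{S}=\{j:\partial g_j(x^\star_j)\text{ is a singleton}\}$; $g_j$ is $\mathcal{C}^2$ near $x^\star_j$ for $j\in\mathcal{S}$, $f$ is $\mathcal{C}^2$ near $x^\star$, and $\nabla^2_{\mathcal{S},\mathcal{S}}f(x^\star)\succ0$. Step sizes $0<\gamma_j\le1/L_j$, $L_j$ the coordinatewise Lipschitz constant of $\nabla_jf$. For $j\in\mathcal{S}$, $z^\star_j=x^\star_j-\gamma_j\nabla_jf(x^\star)$, $p_j>0$ is the derivative of $\operatorname{prox}_{\gamma_jg_j}$ at $z^\star_j$, $u_j=\frac1{\gamma_jp_j}-\frac1{\gamma_j}$, $M=\nabla^2_{\mathcal{S},\mathcal{S}}f(x^\star)+\operatorname{diag}(u)$ (symmetric positive definite), $M^{1/2}$ its symmetric square root and $M^{1/2}_{:,j}$ its column indexed by $j$. $\|\cdot\|_2$ is the spectral norm. *)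

From HB Require Import structures.
From mathcomp Require Import all_boot all_order all_algebra.
From mathcomp Require Import all_classical all_reals all_analysis.
Set Implicit Arguments. Unset Strict Implicit. Unset Printing Implicit Defensive.
Import Order.TTheory GRing.Theory Num.Theory.
Import numFieldNormedType.Exports.
Local Open Scope ring_scope.
Local Open Scope classical_set_scope.

Section Defs.
Variable R : realType.

Definition ebasis (p : nat) (j : 'I_p) : 'rV[R]_p := delta_mx 0 j.

Definition partial (p : nat) (f : 'rV[R]_p -> R) (j : 'I_p) (x : 'rV[R]_p) : R :=
  'D_(ebasis j) f x.

Definition grad (p : nat) (f : 'rV[R]_p -> R) (x : 'rV[R]_p) : 'rV[R]_p :=
  \row_j partial f j x.

Definition hess (p : nat) (f : 'rV[R]_p -> R) (x : 'rV[R]_p) : 'M[R]_p :=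
  \matrix_(i, j) 'D_(ebasis i) (partial f j) x.

Definition enorm (p : nat) (v : 'rV[R]_p) : R := Num.sqrt (\sum_i v 0 i ^+ 2).
Definition enormc (p : nat) (v : 'cV[R]_p) : R := Num.sqrt (\sum_i v i 0 ^+ 2).

Definition spec_norm (n : nat) (A : 'M[R]_n) : R :=
  sup [set enormc (A *m x) | x in [set x : 'cV[R]_n | enormc x <= 1]].

Definition convex_fun (p : nat) (f : 'rV[R]_p -> R) : Prop :=
  forall x y (t : R), (0 <= t)%R -> (t <= 1)%R -> f (t *: x + (1 - t) *: y) <= t * f x + (1 - t) * f y.

Definition lipschitz_grad (p : nat) (f : 'rV[R]_p -> R) : Prop :=
  (forall x, differentiable f x) /\
  exists Lg : R, forall x y, enorm (grad f x - grad f y) <= Lg * enorm (x - y).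

Definition coord_lipschitz (p : nat) (f : 'rV[R]_p -> R) (j : 'I_p) (L : R) : Prop :=
  forall x (t : R), `|partial f j (x + t *: ebasis j) - partial f j x| <= L * `|t|.

Definition C2_near (p : nat) (f : 'rV[R]_p -> R) (a : 'rV[R]_p) : Prop :=
  \forall x \near a,
    differentiable f x /\ (forall j, differentiable (partial f j) x) /\
    (forall i j, {for x, continuous (fun y => hess f y i j)}).

Definition proper_fun (g : R -> \bar R) : Prop :=
  (exists x, g x < +oo)%E /\ (forall x, g x != -oo)%E.

Definition closed_fun (g : R -> \bar R) : Prop :=
  forall a : \bar R, closed [set x | (g x <= a)%E].

Definition convex_efun (g : R -> \bar R) : Prop :=
  forall x y (t : R), (0 <= t)%R -> (t <= 1)%R ->
    (g (t * x + (1 - t) * y)%R <= t%:E * g x + (1 - t)%:E * g y)%E.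

Definition subdiff (g : R -> \bar R) (x : R) : set R :=
  [set v | (g x \is a fin_num)%E /\ forall y, (g x + (v * (y - x))%R%:E <= g y)%E].

Definition singleton_set (A : set R) : Prop := exists v, A = [set v].

Definition C2_near1 (g : R -> \bar R) (a : R) : Prop :=
  exists h : R -> R, \forall x \near a,
    g x = (h x)%:E /\ derivable h x 1 /\ derivable (derive1 h) x 1 /\
    {for x, continuous (derive1 (derive1 h))}.

Definition is_prox (gam : R) (g : R -> \bar R) (P : R -> R) : Prop :=
  forall z y, (gam%:E * g (P z) + ((P z - z) ^+ 2 / 2)%R%:E
               <= gam%:E * g y + ((y - z) ^+ 2 / 2)%R%:E)%E.

End Defs.

(* With q the k-th column of the symmetric square root Q of M and c = gam_j p_j,
   B = c q q^T maps x to c (q . x) q, so by Cauchy-Schwarz its spectral norm is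
   at most c |q|^2 = c (Q Q)_kk = c M_kk.  Since c u_j = 1 - p_j and the diagonal
   Hessian entry is at most the coordinatewise Lipschitz constant L_j, we get
   c M_kk <= p_j gam_j L_j + 1 - p_j <= 1. *)

From HB Require Import structures.
From mathcomp Require Import all_boot all_order all_algebra.
From mathcomp Require Import all_classical all_reals all_analysis.
From mathcomp Require Import ring lra.
Set Implicit Arguments. Unset Strict Implicit. Unset Printing Implicit Defensive.
Import Order.TTheory GRing.Theory Num.Theory.
Import numFieldNormedType.Exports.
Local Open Scope ring_scope.

Lemma sum_mul_sqr_le (R : realFieldType) n (q x : 'I_n -> R) :
  (\sum_i q i * x i) ^+ 2 <= (\sum_i q i ^+ 2) * (\sum_i x i ^+ 2).
Proof.
set a := \sum_i q i ^+ 2; set b := \sum_i x i ^+ 2; set s := \sum_i q i * x i.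
have lagrange : \sum_i \sum_j (q i * x j - q j * x i) ^+ 2 = (a * b - s ^+ 2) *+ 2.
  rewrite (eq_bigr (fun i => q i ^+ 2 * b + x i ^+ 2 * a - q i * x i * s *+ 2)).
    by rewrite sumrB big_split /= -!mulr_suml sumrMnl -mulr_suml -/a -/b -/s; ring.
  move=> i _; rewrite /a /b /s !mulr_sumr -sumrMnl -big_split -sumrB /=.
  by apply: eq_bigr => j _; ring.
have : 0 <= \sum_i \sum_j (q i * x j - q j * x i) ^+ 2.
  by do 2!(apply: sumr_ge0 => ? _); exact: sqr_ge0.
by rewrite lagrange pmulrn_lge0 // subr_ge0.
Qed.

Section EuclideanNorm.
Variable R : realType.

Lemma enormc_ge0 n (v : 'cV[R]_n) : 0 <= enormc v.
Proof. exact: sqrtr_ge0. Qed.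

Lemma enormc_sqr n (v : 'cV[R]_n) : enormc v ^+ 2 = \sum_i v i 0 ^+ 2.
Proof. by rewrite sqr_sqrtr // sumr_ge0 // => i _; exact: sqr_ge0. Qed.

Lemma enormcZ n (a : R) (v : 'cV[R]_n) : enormc (a *: v) = `|a| * enormc v.
Proof.
rewrite /enormc (eq_bigr (fun i => a ^+ 2 * v i 0 ^+ 2)); last first.
  by move=> i _; rewrite mxE exprMn.
by rewrite -mulr_sumr sqrtrM ?sqr_ge0 // sqrtr_sqr.
Qed.

Lemma enormc0 n : enormc (0 : 'cV[R]_n) = 0.
Proof. by rewrite -(scale0r 0) enormcZ normr0 mul0r. Qed.

Lemma dotmx_le_enormc n (q x : 'cV[R]_n) :
  `|(q^T *m x) 0 0| <= enormc q * enormc x.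
Proof.
have -> : (q^T *m x) 0 0 = \sum_i q i 0 * x i 0.
  by rewrite mxE; apply: eq_bigr => i _; rewrite mxE.
rewrite -sqrtr_sqr -sqrtrM ?sumr_ge0 // => [|i _]; last exact: sqr_ge0.
by rewrite ler_sqrt ?mulr_ge0 ?sumr_ge0 ?sum_mul_sqr_le // => i _; exact: sqr_ge0.
Qed.

Lemma spec_norm_le n (A : 'M[R]_n) (r : R) :
  (forall x : 'cV[R]_n, enormc x <= 1 -> enormc (A *m x) <= r) -> spec_norm A <= r.
Proof.
move=> Ar; apply: ge_sup.
  by exists (enormc (A *m 0)), 0; rewrite //= enormc0 ler01.
by move=> _ [x x1 <-]; apply: Ar.
Qed.

Lemma outer_mulmx n (q x : 'cV[R]_n) : q *m q^T *m x = (q^T *m x) 0 0 *: q.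
Proof. by rewrite -mulmxA {1}[q^T *m x]mx11_scalar mul_mx_scalar. Qed.

Lemma spec_norm_outer_le n (c : R) (q : 'cV[R]_n) :
  0 <= c -> spec_norm (c *: (q *m q^T)) <= c * enormc q ^+ 2.
Proof.
move=> c0; apply: spec_norm_le => x x1.
rewrite -scalemxAl outer_mulmx scalerA enormcZ normrM ger0_norm // -mulrA expr2.
rewrite ler_wpM2l // ler_wpM2r ?enormc_ge0 //.
by rewrite (le_trans (dotmx_le_enormc q x)) // ler_piMr ?enormc_ge0.
Qed.

Lemma enormc_col_sym n (Q : 'M[R]_n) (k : 'I_n) :
  Q^T = Q -> enormc (col k Q) ^+ 2 = (Q *m Q) k k.
Proof.
move=> QT; rewrite enormc_sqr mxE; apply: eq_bigr => i _.
by rewrite !mxE expr2 -{1}QT mxE.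
Qed.
End EuclideanNorm.

Lemma hess_diag_le (R : realType) (p : nat) (f : 'rV[R]_p -> R) (x : 'rV[R]_p)
    (j : 'I_p) (L : R) :
  differentiable (partial f j) x -> coord_lipschitz f j L -> hess f x j j <= L.
Proof.
move=> df cl; rewrite mxE /derive.
apply: limr_le; first exact: diff_derivable.
near=> h => /=.
have hn0 : h != 0 by near: h; exact: nbhs_dnbhs_neq.
rewrite /shift [h *: _ + x]addrC.
apply: le_trans (ler_norm _) _.
by rewrite normrZ normfV mulrC ler_pdivrMr ?normr_gt0 // cl.
Unshelve. all: by end_near.
Qed.

Lemma scaled_diag_entry_le1 (R : realFieldType) (gam pd L h : R) :
  0 < gam -> 0 < pd -> gam * L <= 1 -> h <= L ->
  gam * pd * (h + (1 / (gam * pd) - 1 / gam)) <= 1.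
Proof.
move=> gam0 pd0 gamL hL.
have -> : gam * pd * (h + (1 / (gam * pd) - 1 / gam)) = pd * (gam * h) + 1 - pd.
  by field; rewrite !lt0r_neq0.
have : gam * h <= 1 by rewrite (le_trans _ gamL) // ler_pM2l.
nra.
Qed.

Theorem lemma5 (R : realType) (p : nat)
  (f : 'rV[R]_p -> R) (g : 'I_p -> R -> \bar R)
  (xs : 'rV[R]_p) (gam L pd : 'I_p -> R) (prox : 'I_p -> R -> R)
  (Q : 'M[R]_#|[set j : 'I_p | `[< singleton_set (subdiff (g j) (xs 0 j)) >]]|) :
  let S := [set j : 'I_p | `[< singleton_set (subdiff (g j) (xs 0 j)) >]] in
  convex_fun f -> lipschitz_grad f ->
  (forall j, proper_fun (g j) /\ closed_fun (g j) /\ convex_efun (g j)) ->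
  (forall x : 'rV[R]_p,
     (f xs)%:E + \sum_j g j (xs 0%R j) <= (f x)%:E + \sum_j g j (x 0%R j))%E ->
  (forall j, j \in S -> C2_near1 (g j) (xs 0 j)) ->
  C2_near f xs ->
  (forall v : 'rV[R]_p, (forall i, i \notin S -> v 0 i = 0) -> v != 0 ->
     0 < (v *m hess f xs *m v^T) 0 0) ->
  (forall j, coord_lipschitz f j (L j)) ->
  (forall j, 0 < gam j /\ gam j * L j <= 1) ->
  (forall j, j \in S ->
     is_prox (gam j) (g j) (prox j) /\
     is_derive (xs 0 j - gam j * partial f j xs) 1 (prox j) (pd j) /\ 0 < pd j) ->
  let u := fun j => 1 / (gam j * pd j) - 1 / gam j in
  let M := \matrix_(a, b) (hess f xs (enum_val a) (enum_val b)
                           + (a == b)%:R * u (enum_val a)) in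
  Q^T = Q -> (forall x : 'cV[R]_#|S|, 0 <= (x^T *m Q *m x) 0 0) -> Q *m Q = M ->
  forall k : 'I_#|S|,
    spec_norm ((gam (enum_val k) * pd (enum_val k)) *: (col k Q *m (col k Q)^T)) <= 1.
Proof.
move=> S _ _ _ _ _ C2f _ cl gamL hp u M QT _ QQ k.
set j := enum_val k.
have [gam0 gamL1] := gamL j.
have [_ [_ pd0]] := hp j (enum_valP k).
have [_ [dpartial _]] := nbhs_singleton C2f.
apply: le_trans (spec_norm_outer_le _ _) _; first exact/ltW/mulr_gt0.
rewrite enormc_col_sym // QQ mxE eqxx mul1r.
exact: scaled_diag_entry_le1 gam0 pd0 gamL1 (hess_diag_le (dpartial j) (cl j)).
Qed.
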